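(* Let $W=x_1^{a_1}+\dots+x_N^{a_N}$ with all $a_i>2$. The genus-zero potentials $\mathcal F^{\rm FJRW}_{0,W}$ and $\mathcal F^{\rm SG}_{0,W^T,\zeta}$ are each completely determined (via the pairing, the ring structure, the dimension and integer-degree vanishing conditions, and the WDVV equations) by the Frobenius algebra structure and the correlators $\langle x_j,x_j,x_j^{a_j-2},\prod_{i=1}^Nx_i^{a_i-2}\rangle$, $j=1,\dots,N$ (on the A-side, with insertions replaced by their images under Krawitz's map $\Psi$).
   Context: Here $W^T=W$. $\mathcal F^{\rm FJRW}_{0,W}$ is the genus-zero primary FJRW prepotential of $(W,G_W)$, $G_W$ the maximal diagonal symmetry group; $\mathcal F^{\rm SG}_{0,W^T,\zeta}$ is the Saito–Givental prepotential (in flat coordinates) of the primitive form $\zeta$ associated with the standard good basis $\{\prod x_i^{r_i}d^Nx: 0\le r_i\le a_i-2\}$. $\Psi:\mathrm{Jac}(W)\to\mathcal H_W$ is Krawitz's Frobenius algebra isomorphism, $\Psi(x_i)$ = generator of the narrow sector $\rho_iJ_W$, where $\rho_i=(1,\dots,e^{2\pi\sqrt{-1}/a_i},\dots,1)$ and $J_W=(e^{2\pi\sqrt{-1}/a_1},\dots,e^{2\pi\sqrt{-1}/a_N})$. The WDVV equations give, for any insertions, $\langle\xi_1,\dots,\xi_{k-3},\gamma,\delta,\epsilon\star\phi\rangle=\langle\xi,\gamma,\epsilon,\delta\star\phi\rangle+\langle\xi,\gamma\star\epsilon,\delta,\phi\rangle-\langle\xi,\gamma\star\delta,\epsilon,\phi\rangle+S$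 with $S$ a combination of correlators with fewer than $k$ insertions ($S=0$ if $k=4$). *)

(* Abstract genus-zero correlator systems on the Frobenius
   algebra Jac(W) of the Fermat polynomial W = x_1^{a_1} + ... + x_N^{a_N},
   written in the monomial basis {x^r : 0 <= r_i <= a_i - 2}. *)
From HB Require Import structures.
From mathcomp Require Import all_boot all_order all_algebra.
Set Implicit Arguments.
Unset Strict Implicit.
Unset Printing Implicit Defensive.
Import Order.TTheory GRing.Theory Num.Theory.
Local Open Scope ring_scope.

Definition bnd (N : nat) (a : 'I_N -> nat) : nat := (\max_(i < N) a i)%N.

(* exponent vectors r, standing for the monomial x^r = prod_i x_i^{r_i} *)
Definition Mon (N : nat) (a : 'I_N -> nat) := {ffun 'I_N -> 'I_(bnd a)}.

(* x^r is a standard basis element of Jac(W): 0 <= r_i <= a_i - 2 *)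
Definition valid N (a : 'I_N -> nat) (r : Mon a) : bool :=
  [forall i, (nat_of_ord (r i) <= a i - 2)%N].

(* x^r is the top monomial prod_i x_i^{a_i-2} (generator of the socle) *)
Definition is_top N (a : 'I_N -> nat) (r : Mon a) : bool :=
  [forall i, nat_of_ord (r i) == (a i - 2)%N].

Definition is_xj N (a : 'I_N -> nat) (j : 'I_N) (r : Mon a) : bool :=
  [forall i, nat_of_ord (r i) == (i == j) :> nat].

Definition is_xj_top N (a : 'I_N -> nat) (j : 'I_N) (r : Mon a) : bool :=
  [forall i, nat_of_ord (r i) == (if i == j then a j - 2 else 0)%N].

(* x^e and x^f are dual: x^e x^f = top monomial *)
Definition compl N (a : 'I_N -> nat) (e f : Mon a) : bool :=
  [forall i, (nat_of_ord (e i) + nat_of_ord (f i) == a i - 2)%N].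

Definition wdeg N (a : 'I_N -> nat) (r : Mon a) : rat :=
  \sum_(i < N) (nat_of_ord (r i))%:R / (a i)%:R.

Definition chat N (a : 'I_N -> nat) : rat :=
  \sum_(i < N) (1 - 2%:R / (a i)%:R).

(* A correlator system: corr s = < x^{s_1}, ..., x^{s_k} >_{0,k}  (k >= 3). *)
Section CorrConditions.
Variables (K : numFieldType) (N : nat) (a : 'I_N -> nat).
Variable (c : K).  (* pairing normalisation: eta(1, top) = c *)
Variable (corr : seq (Mon a) -> K).

Definition all_valid (s : seq (Mon a)) := all (@valid N a) s.

Definition ax_sym := forall s t, all_valid s -> perm_eq s t -> corr s = corr t.

(* three-point correlators = Frobenius algebra structure:
   <x^r,x^s,x^t> = eta(x^r x^s, x^t), which is c iff r+s+t = top, else 0 *)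
Definition ax_three := forall r s t, valid r -> valid s -> valid t ->
  corr [:: r; s; t] =
    if [forall i, (nat_of_ord (r i) + nat_of_ord (s i) + nat_of_ord (t i)
                    == a i - 2)%N] then c else 0.

Definition ax_dim := forall s, all_valid s -> (3 <= size s)%N -> corr s != 0 ->
  \sum_(r <- s) wdeg r = chat a + (size s)%:R - 3%:R.

Definition ax_int := forall s, all_valid s -> (3 <= size s)%N -> corr s != 0 ->
  forall i, (\sum_(r <- s) (nat_of_ord (r i)).+1 = size s - 2 %[mod a i])%N.

(* WDVV equations (full form): for insertions xs, g, d, e, f,
   sum_{I u J = xs} sum_{basis} <xs_I, g, d, e_a> eta^{ab} <e_b, xs_J, e, f>
   = same with d and e exchanged; eta^{ab} = c^-1 [a,b dual]. *)
Definition wdvv_side (xs : seq (Mon a)) (g d e f : Mon a) : K :=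
  \sum_(m : (size xs).-tuple bool)
   \sum_(u : Mon a | valid u) \sum_(v : Mon a | valid v)
     (if compl u v then c^-1 else 0) *
     corr (mask m xs ++ [:: g; d; u]) * corr (v :: mask (map negb m) xs ++ [:: e; f]).

Definition ax_wdvv := forall xs g d e f, all_valid xs ->
  valid g -> valid d -> valid e -> valid f ->
  wdvv_side xs g d e f = wdvv_side xs g e d f.

Definition genus0_theory := [/\ ax_sym, ax_three, ax_dim, ax_int & ax_wdvv].
End CorrConditions.

(* Induction on the number of insertions and, for a fixed number k >= 4, downward
   induction on the sum of the squares of the degrees of the insertions, which is
   bounded.  Three-point correlators are the Frobenius algebra.  Order the
   insertions by degree, P >= R >= T >= ... .  If deg T >= 2, write T = x_l T' and
   apply WDVV to (P, R, x_l, T'): the correlator appears once, and every other term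
   has fewer insertions or moves degree onto heavier insertions, increasing the sum
   of squares.  If all insertions but P and R have degree <= 1, the dimension and
   integer-degree selection rules force the correlator to vanish unless it is
   <x_j, x_j, P, R> with P R = x_j^(a_j - 2) times the top monomial; one further WDVV
   step reduces it to P = top, R = x_j^(a_j - 2), the prescribed correlators. *)

From HB Require Import structures.
From mathcomp Require Import all_boot all_order all_algebra.
From mathcomp Require Import zify ring.
Import Order.TTheory GRing.Theory Num.Theory.
Set Implicit Arguments.
Unset Strict Implicit.

Section Fermat.
Variables (N : nat) (a : 'I_N -> nat).
Hypothesis a_gt2 : forall i, 2 < a i.

Lemma bnd_gt0 (i : 'I_N) : 0 < bnd a.
Proof. by apply: leq_trans (leq_bigmax i); have := a_gt2 i; lia. Qed.

(* Exponents [h i] beyond the bound [bnd a] are replaced by junk; only exponent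
   vectors with [h i <= a i - 2] are ever used. *)
Definition mon (h : 'I_N -> nat) : Mon a :=
  [ffun i => insubd (Ordinal (bnd_gt0 i)) (h i)].

Lemma monE h i : h i <= a i - 2 -> mon h i = h i :> nat.
Proof.
move=> hi; rewrite ffunE val_insubd.
have le_a : a i <= bnd a by exact: leq_bigmax.
by have -> : h i < bnd a by have := a_gt2 i; lia.
Qed.

Lemma validP (r : Mon a) : reflect (forall i, r i <= a i - 2) (valid r).
Proof. exact: forallP. Qed.

Lemma mon_valid h : (forall i, h i <= a i - 2) -> valid (mon h).
Proof. by move=> hle; apply/validP => i; rewrite monE. Qed.

Lemma mon_inj (r t : Mon a) : (forall i, r i = t i :> nat) -> r = t.
Proof. by move=> eq_rt; apply/ffunP => i; apply: val_inj; exact: eq_rt. Qed.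

Definition mdeg (r : Mon a) : nat := \sum_i r i.

Lemma leq_exp_mdeg (r : Mon a) j : r j <= mdeg r.
Proof. by rewrite /mdeg (bigD1 j) //=; lia. Qed.

Definition sum_valid (e f : Mon a) : bool := [forall i, e i + f i <= a i - 2].

Definition madd (e f : Mon a) : Mon a := mon (fun i => e i + f i).
Definition mvar (l : 'I_N) : Mon a := mon (fun i => i == l).
Definition mdiv_var (t : Mon a) (l : 'I_N) : Mon a := mon (fun i => t i - (i == l)).
Definition mdual (u : Mon a) : Mon a := mon (fun i => a i - 2 - u i).

Lemma maddE e f i : sum_valid e f -> madd e f i = e i + f i :> nat.
Proof. by move/forallP=> le_ef; rewrite monE. Qed.

Lemma madd_valid e f : sum_valid e f -> valid (madd e f).
Proof. by move/forallP; apply: mon_valid. Qed.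

Lemma mdeg_madd e f : sum_valid e f -> mdeg (madd e f) = mdeg e + mdeg f.
Proof. by move=> ef; rewrite /mdeg -big_split; apply: eq_bigr => i _; rewrite maddE. Qed.

Lemma mvar_le i l : (i == l) <= a i - 2.
Proof. by have := a_gt2 i; case: (i == l) => /=; lia. Qed.

Lemma mvarE l i : mvar l i = (i == l) :> nat.
Proof. exact: monE (mvar_le i l). Qed.

Lemma mvar_valid l : valid (mvar l).
Proof. by apply: mon_valid => i; exact: mvar_le. Qed.

Lemma mdeg_mvar l : mdeg (mvar l) = 1.
Proof.
rewrite /mdeg (bigD1 l) //= mvarE eqxx big1 // => i /negPf ne_il.
by rewrite mvarE ne_il.
Qed.

Lemma mdiv_varE t l i : valid t -> mdiv_var t l i = t i - (i == l) :> nat.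
Proof. by move=> /validP t_le; rewrite monE //; have := t_le i; lia. Qed.

Lemma mdiv_var_valid t l : valid t -> valid (mdiv_var t l).
Proof. by move=> /validP t_le; apply: mon_valid => i; have := t_le i; lia. Qed.

Lemma sum_valid_mvar_mdiv_var t l :
  valid t -> sum_valid (mvar l) (mdiv_var t l).
Proof.
move=> vt; apply/forallP => i; rewrite mvarE mdiv_varE //.
by move/validP: vt => /(_ i); have := a_gt2 i; case: (i == l) => /=; lia.
Qed.

Lemma madd_mvar_mdiv_var t l :
  valid t -> 0 < t l -> madd (mvar l) (mdiv_var t l) = t.
Proof.
move=> vt tl; apply: mon_inj => i.
rewrite maddE ?sum_valid_mvar_mdiv_var // mvarE mdiv_varE //.
by case: eqP => [->|_] /=; lia.
Qed.

Lemma mdeg_mdiv_var t l : valid t -> 0 < t l -> mdeg (mdiv_var t l) = mdeg t - 1.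
Proof.
move=> vt tl; have := mdeg_madd (sum_valid_mvar_mdiv_var l vt).
by rewrite madd_mvar_mdiv_var // mdeg_mvar; lia.
Qed.

Lemma mdualE u i : mdual u i = a i - 2 - u i :> nat.
Proof. by rewrite monE //; lia. Qed.

Lemma mdual_valid u : valid (mdual u).
Proof. by apply: mon_valid => i; lia. Qed.

Lemma complC (u v : Mon a) : compl u v = compl v u.
Proof. by apply/forallP/forallP => uv i; rewrite addnC; exact: uv. Qed.

Lemma compl_mdual (u v : Mon a) : valid u -> compl u v = (v == mdual u).
Proof.
move=> vu; apply/forallP/eqP => [uv|-> i].
  by apply: mon_inj => i; rewrite mdualE; have := eqP (uv i); lia.
by rewrite mdualE; move/validP: vu => /(_ i); lia.
Qed.

Lemma mdual_sum_top (u e f : Mon a) : valid u ->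
  [forall i, mdual u i + e i + f i == a i - 2] = sum_valid e f && (u == madd e f).
Proof.
move=> /validP u_le; apply/forallP/andP => [top|[ef /eqP ->] i].
  have ef : sum_valid e f.
    by apply/forallP => i; have := eqP (top i); rewrite mdualE; have := u_le i; lia.
  split=> //; apply/eqP/mon_inj => i; rewrite maddE //.
  by have := eqP (top i); rewrite mdualE; have := u_le i; lia.
by rewrite mdualE maddE //; apply/eqP; move/forallP: ef => /(_ i); lia.
Qed.

Definition deg_sq_sum (s : seq (Mon a)) : nat := \sum_(r <- s) mdeg r ^ 2.

Lemma deg_sq_sum_cat s t : deg_sq_sum (s ++ t) = deg_sq_sum s + deg_sq_sum t.
Proof. exact: big_cat. Qed.

Lemma deg_sq_sum_cons r s : deg_sq_sum (r :: s) = mdeg r ^ 2 + deg_sq_sum s.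
Proof. exact: big_cons. Qed.

Definition mdeg_max : nat := \sum_i (a i - 2).

Lemma mdeg_le_max r : valid r -> mdeg r <= mdeg_max.
Proof. by move=> vr; apply: leq_sum => i _; exact: validP vr i. Qed.

Lemma deg_sq_sum_bound s : all_valid s -> deg_sq_sum s <= size s * mdeg_max ^ 2.
Proof.
elim: s => [|r s IHs] /=; first by rewrite /deg_sq_sum big_nil.
case/andP=> vr vs; rewrite deg_sq_sum_cons mulSn.
by have := IHs vs; have := mdeg_le_max vr; nia.
Qed.

Definition expsum (i : 'I_N) (s : seq (Mon a)) : nat := \sum_(r <- s) r i.

Section Selection.
Variables (K : numFieldType) (corr : seq (Mon a) -> K).
Hypotheses (corr_dim : ax_dim corr) (corr_int : ax_int corr).
Variable s : seq (Mon a).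
Hypotheses (valid_s : all_valid s) (size_s : 3 <= size s) (corr_s : (corr s != 0)%R).

Lemma selection_dvd i : a i %| expsum i s + 2.
Proof.
have := corr_int valid_s size_s corr_s i.
have -> : \sum_(r <- s) (r i).+1 = expsum i s + size s.
  by rewrite /expsum -sum1_size -big_split /=; apply: eq_bigr => r _; rewrite addn1.
have -> : expsum i s + size s = (expsum i s + 2) + (size s - 2) by lia.
by move=> /eqP; rewrite -[X in _ == X %% _]add0n eqn_modDr mod0n.
Qed.

Lemma selection_sum : \sum_i (expsum i s + 2) %/ a i = N + size s - 3.
Proof.
have := corr_dim valid_s size_s corr_s; rewrite /wdeg exchange_big /= /chat.
have wdeg_sum i : ((expsum i s)%:R / (a i)%:R =
    ((expsum i s + 2) %/ a i)%:R - 2%:R / (a i)%:R :> rat)%R.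
  have ai0 : ((a i)%:R != 0 :> rat)%R by rewrite pnatr_eq0; have := a_gt2 i; lia.
  set q := (expsum i s + 2) %/ a i.
  have -> : ((expsum i s)%:R = q%:R * (a i)%:R - 2%:R :> rat)%R.
    by rewrite -natrM divnK ?selection_dvd // natrD addrK.
  by field.
under eq_bigr => i _ do rewrite -mulr_suml -natr_sum -/(expsum i s) wdeg_sum.
rewrite !sumrB sumr_const card_ord => dim_eq.
apply/eqP; rewrite -(eqr_nat rat) natr_sum natrB ?natrD; last lia.
apply/eqP/(addIr (- \sum_(i < N) 2%:R / (a i)%:R)%R).
by rewrite dim_eq; ring.
Qed.

End Selection.

Lemma selection_count (m n p : 'I_N -> nat) k :
  (forall i, p i <= 2 * (a i - 2)) -> (forall i, m i * a i = p i + n i + 2) ->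
  \sum_(i < N) m i = N + k - 1 -> \sum_(i < N) n i <= k -> 1 < k ->
  exists j, [/\ k = 2, n j = 2, p j = 2 * (a j - 2) &
                forall i, i != j -> n i = 0 /\ p i = a i - 2].
Proof.
move=> p_le m_eq sum_m sum_n k_gt1.
have m_bnd i : 0 < m i <= n i + 1.
  by have := m_eq i; have := p_le i; have := a_gt2 i; nia.
have m_ge2 i : 1 < m i -> m i <= n i.
  by have := m_eq i; have := p_le i; have := a_gt2 i; nia.
(* [d i] is the slack in [m i <= n i + 1]; its total is at most one. *)
pose d i := n i + 1 - m i.
have sum_md : \sum_(i < N) m i + \sum_(i < N) d i = \sum_(i < N) n i + N.
  rewrite -big_split /= (eq_bigr (fun i => n i + 1)) => [|i _]; last first.
    by rewrite /d; have := m_bnd i; lia.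
  by rewrite big_split /= sum1_card card_ord.
have [j m_j] : exists j, 1 < m j.
  apply/existsP; apply: contraT; rewrite negb_exists => /forallP m_le1.
  have : \sum_(i < N) m i <= \sum_(i < N) 1.
    by apply: leq_sum => i _; have := m_le1 i; lia.
  by rewrite sum1_card card_ord sum_m; lia.
have d_j : 0 < d j by rewrite /d; have := m_ge2 j m_j; lia.
move: sum_md; rewrite [\sum_(i < N) d i](bigD1 j) //= sum_m.
set sn := \sum_(i < N) n i in sum_n *; set D := \sum_(i < N | i != j) d i => sum_md.
have D0 : D = 0 by lia.
have other i : i != j -> n i = 0 /\ m i = 1.
  move=> ne_ij; move/eqP: D0; rewrite sum_nat_eq0 => /forallP /(_ i).
  rewrite ne_ij /d /= => /eqP d_i.
  by have := m_bnd i; case: (leqP 2 (m i)) => [/m_ge2|]; lia.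
have n_j : n j = sn.
  by rewrite /sn (bigD1 j) //= big1 ?addn0 // => i /other[].
have [k2 nj2] : k = 2 /\ n j = 2.
  by have := m_eq j; have := p_le j; have := a_gt2 j; rewrite /d in d_j sum_md; nia.
exists j; split=> // [|i ne_ij].
  by have := m_eq j; have := p_le j; rewrite /d in d_j sum_md; nia.
by have [n_i m_i] := other i ne_ij; split=> //; have := m_eq i; rewrite m_i n_i; lia.
Qed.

Lemma is_xjP j (u : Mon a) : mdeg u <= 1 -> u j = 1 :> nat -> is_xj j u.
Proof.
move=> deg_u u_j; apply/forallP => i; case: (eqVneq i j) => [->|ne_ij]; first by rewrite u_j.
move: deg_u; rewrite /mdeg (bigD1 j) //= (bigD1 i) //=; lia.
Qed.

Lemma is_xjE j (u : Mon a) : is_xj j u -> forall i, u i = (i == j) :> nat.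
Proof. by move/forallP=> u_j i; apply/eqP. Qed.

Lemma is_xj_valid j (u : Mon a) : is_xj j u -> valid u.
Proof. by move/is_xjE=> u_j; apply/validP => i; rewrite u_j mvar_le. Qed.

Lemma selection_terminal (P R : Mon a) (rest : seq (Mon a)) :
  valid P -> valid R -> {in rest, forall r, mdeg r <= 1} -> 1 < size rest ->
  (forall i, a i %| expsum i [:: P, R & rest] + 2) ->
  \sum_(i < N) (expsum i [:: P, R & rest] + 2) %/ a i = N + size rest - 1 ->
  exists j u1 u2, rest = [:: u1; u2] /\ [/\ is_xj j u1, is_xj j u2,
     P j = a j - 2 :> nat, R j = a j - 2 :> nat &
     forall i, i != j -> P i + R i = a i - 2].
Proof.
move=> /validP P_le /validP R_le deg_rest size_rest dvd_a sum_eq.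
have p_le i : P i + R i <= 2 * (a i - 2) by have := P_le i; have := R_le i; lia.
have m_eq i : (expsum i [:: P, R & rest] + 2) %/ a i * a i = P i + R i + expsum i rest + 2.
  by rewrite divnK // /expsum !big_cons addnA.
have sum_n : \sum_(i < N) expsum i rest <= size rest.
  rewrite /expsum exchange_big /= -sum1_size big_seq [X in _ <= X]big_seq.
  by apply: leq_sum => r /deg_rest.
have [j [k2 n_j p_j other]] := selection_count p_le m_eq sum_eq sum_n size_rest.
case: rest k2 deg_rest n_j other {dvd_a sum_eq sum_n size_rest m_eq} => [|u1 [|u2 []]] //= _.
move=> deg_u; rewrite /expsum !big_cons big_nil addn0 => n_j other.
have deg_u1 : mdeg u1 <= 1 by apply: deg_u; rewrite inE eqxx.
have deg_u2 : mdeg u2 <= 1 by apply: deg_u; rewrite !inE eqxx orbT.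
have := leq_exp_mdeg u1 j; have := leq_exp_mdeg u2 j => u2_j u1_j.
exists j, u1, u2; split=> //; split.
- by apply: is_xjP => //; lia.
- by apply: is_xjP => //; lia.
- by have := P_le j; have := R_le j; lia.
- by have := P_le j; have := R_le j; lia.
- by move=> i /other[].
Qed.

Section ThreePointContraction.
Variables (K : numFieldType) (c : K) (corr : seq (Mon a) -> K).
Hypotheses (c_neq0 : (c != 0)%R) (corr_three : ax_three c corr).
Hypothesis corr_sym : ax_sym corr.
Local Open Scope ring_scope.

Lemma contract_three_point (X : Mon a -> K) (e f : Mon a) : valid e -> valid f ->
  \sum_(u : Mon a | valid u) \sum_(v : Mon a | valid v)
     (if compl u v then c^-1 else 0) * X u * corr [:: v; e; f]
  = if sum_valid e f then X (madd e f) else 0.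
Proof.
move=> ve vf.
under eq_bigr => u vu.
  rewrite (bigD1 (mdual u)) ?mdual_valid //= compl_mdual // eqxx big1 ?addr0.
    rewrite corr_three ?mdual_valid // mdual_sum_top //.
    over.
  by move=> v /andP [_ /negPf v_neq]; rewrite compl_mdual // v_neq !mul0r.
case ef: (sum_valid e f) => /=; last by rewrite big1 // => u _; rewrite mulr0.
rewrite (bigD1 (madd e f)) ?madd_valid //= eqxx mulrAC mulVf // mul1r big1 ?addr0 //.
by move=> u /andP [_ /negPf ->]; rewrite mulr0.
Qed.

Lemma contract_three_point_left (Y : Mon a -> K) (g d : Mon a) : valid g -> valid d ->
  \sum_(u : Mon a | valid u) \sum_(v : Mon a | valid v)
     (if compl u v then c^-1 else 0) * corr [:: g; d; u] * Y v
  = if sum_valid g d then Y (madd g d) else 0.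
Proof.
move=> vg vd; rewrite exchange_big /= -contract_three_point //.
apply: eq_bigr => v vv; apply: eq_bigr => u vu.
rewrite complC mulrAC (corr_sym (t := [:: u; g; d])) //.
  by rewrite /all_valid /= vg vd vu.
by rewrite (perm_catCA [:: g; d] [:: u] [::]).
Qed.

Definition wdvv_term (xs : seq (Mon a)) (g d e f : Mon a) (m : (size xs).-tuple bool) :=
  \sum_(u : Mon a | valid u) \sum_(v : Mon a | valid v)
    (if compl u v then c^-1 else 0) *
    corr (mask m xs ++ [:: g; d; u]) * corr (v :: mask (map negb m) xs ++ [:: e; f]).
Arguments wdvv_term : clear implicits.

Definition proper_split n (m : n.-tuple bool) :=
  (m != nseq_tuple n true) && (m != nseq_tuple n false).

(* The two splittings putting all of [xs] on one side contract to correlators of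
   length [size xs + 3]; all other terms only involve shorter correlators. *)
Lemma wdvv_side_split xs g d e f : (0 < size xs)%N -> all_valid xs ->
  valid g -> valid d -> valid e -> valid f ->
  wdvv_side c corr xs g d e f =
    (if sum_valid e f then corr (xs ++ [:: g; d; madd e f]) else 0) +
    (if sum_valid g d then corr (madd g d :: xs ++ [:: e; f]) else 0) +
    \sum_(m : (size xs).-tuple bool | proper_split m) wdvv_term xs g d e f m.
Proof.
move=> xs_gt0 vxs vg vd ve vf.
have true_neq_false : nseq_tuple (size xs) true != nseq_tuple (size xs) false.
  by apply/eqP => /(congr1 val) /=; case: (size xs) xs_gt0 => // n _ [].
rewrite /wdvv_side (bigD1 (nseq_tuple _ true)) //= (bigD1 (nseq_tuple _ false)) /=;
  last by rewrite eq_sym.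
rewrite addrA; congr (_ + _ + _).
- rewrite mask_true // map_nseq /= mask_false /=.
  exact: (contract_three_point (fun u => corr (xs ++ [:: g; d; u]))).
- rewrite mask_false map_nseq /= mask_true //=.
  exact: (contract_three_point_left (fun v => corr (v :: xs ++ [:: e; f]))).
Qed.

End ThreePointContraction.

Arguments wdvv_term {K} c corr xs g d e f m.

Lemma count_pred1_lt n (m : n.-tuple bool) b :
  m != nseq_tuple n b -> count (pred1 b) m < n.
Proof.
move=> m_neq; rewrite ltn_neqAle; apply/andP; split; last first.
  by rewrite -{2}(size_tuple m) count_size.
apply: contra m_neq => /eqP cnt; apply/eqP/val_inj => /=.
have : all (pred1 b) m by rewrite all_count cnt size_tuple.
by move/all_pred1P; rewrite size_tuple.
Qed.

Lemma subr_shift (V : zmodType) (x1 x2 y1 y2 m m' : V) :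
  (x1 + m = y1 + m' -> x2 + m = y2 + m' -> x1 - x2 = y1 - y2)%R.
Proof.
move=> E1 E2; rewrite -(addrK m x1) -(addrK m x2) E1 E2.
by rewrite opprB addrA subrK [(y2 + _)%R]addrC addrKA.
Qed.

Section TwoTheories.
Variables (K : numFieldType) (c : K) (corr1 corr2 : seq (Mon a) -> K).
Hypotheses (c_neq0 : (c != 0)%R) (T1 : genus0_theory c corr1) (T2 : genus0_theory c corr2).
Local Open Scope ring_scope.

Definition agree_below k := forall s, all_valid s -> (3 <= size s)%N -> (size s < k)%N ->
  corr1 s = corr2 s.

Definition gap (b : bool) (s : seq (Mon a)) : K := if b then corr1 s - corr2 s else 0.

Lemma gapE (b : bool) s : gap b s = (if b then corr1 s else 0) - (if b then corr2 s else 0).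
Proof. by rewrite /gap; case: b; rewrite ?subr0. Qed.

Lemma gap_eq0 (b : bool) s : (b -> corr1 s = corr2 s) -> gap b s = 0.
Proof. by rewrite /gap; case: b => // /(_ isT) ->; rewrite subrr. Qed.

Lemma agree_perm s t : all_valid s -> perm_eq s t -> corr1 s = corr2 s -> corr1 t = corr2 t.
Proof.
case: T1 T2 => sym1 _ _ _ _ [sym2 _ _ _ _] vs st.
by rewrite -(sym1 s t vs st) -(sym2 s t vs st).
Qed.

Lemma wdvv_term_agree xs g d e f : agree_below (size xs + 3) -> all_valid xs ->
  valid g -> valid d -> valid e -> valid f ->
  \sum_(m : (size xs).-tuple bool | proper_split m) wdvv_term c corr1 xs g d e f m =
  \sum_(m : (size xs).-tuple bool | proper_split m) wdvv_term c corr2 xs g d e f m.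
Proof.
move=> agree vxs vg vd ve vf.
apply: eq_bigr => m /andP [not_all_true not_all_false].
apply: eq_bigr => u vu; apply: eq_bigr => v vv.
have size_m : size m = size xs by rewrite size_tuple.
have size_nm : size (map negb m) = size xs by rewrite size_map size_tuple.
have lt_true := count_pred1_lt not_all_true; have lt_false := count_pred1_lt not_all_false.
have count_m : count id m = count (pred1 true) m by apply: eq_count => -[].
have count_nm : count id (map negb m) = count (pred1 false) m.
  by rewrite count_map; apply: eq_count => -[].
congr (_ * _ * _); apply: agree.
- by rewrite /all_valid all_cat all_mask //= vg vd vu.
- by rewrite size_cat /=; lia.
- by rewrite size_cat (size_mask size_m) count_m /= ltn_add2r.
- by rewrite /all_valid /= all_cat all_mask //= vv ve vf.
- by rewrite /= size_cat /=; lia.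
- by rewrite /= size_cat (size_mask size_nm) count_nm /= addn2 addn3 !ltnS.
Qed.

(* Subtracting the WDVV equations of the two theories cancels every term that
   involves only shorter correlators. *)
Lemma wdvv_gap xs g d e f : agree_below (size xs + 3) -> (0 < size xs)%N ->
  all_valid xs -> valid g -> valid d -> valid e -> valid f ->
  gap (sum_valid e f) (xs ++ [:: g; d; madd e f]) +
  gap (sum_valid g d) (madd g d :: xs ++ [:: e; f]) =
  gap (sum_valid d f) (xs ++ [:: g; e; madd d f]) +
  gap (sum_valid g e) (madd g e :: xs ++ [:: d; f]).
Proof.
move=> agree xs_gt0 vxs vg vd ve vf.
case: T1 T2 => sym1 three1 _ _ wdvv1 [sym2 three2 _ _ wdvv2].
have := wdvv1 xs g d e f vxs vg vd ve vf; have := wdvv2 xs g d e f vxs vg vd ve vf.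
rewrite !(wdvv_side_split c_neq0 three1 sym1) // !(wdvv_side_split c_neq0 three2 sym2) //.
rewrite (@wdvv_term_agree xs g d e f) // (@wdvv_term_agree xs g e d f) //.
move=> E2 E1; rewrite !gapE addrACA [RHS]addrACA -!opprD.
exact: subr_shift E1 E2.
Qed.

Lemma agree_by_wdvv xs g d e f : agree_below (size xs + 3) -> (0 < size xs)%N ->
  all_valid xs -> valid g -> valid d -> valid e -> valid f -> sum_valid e f ->
  (sum_valid g d -> corr1 (madd g d :: xs ++ [:: e; f]) = corr2 (madd g d :: xs ++ [:: e; f])) ->
  (sum_valid d f -> corr1 (xs ++ [:: g; e; madd d f]) = corr2 (xs ++ [:: g; e; madd d f])) ->
  (sum_valid g e -> corr1 (madd g e :: xs ++ [:: d; f]) = corr2 (madd g e :: xs ++ [:: d; f])) ->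
  corr1 (xs ++ [:: g; d; madd e f]) = corr2 (xs ++ [:: g; d; madd e f]).
Proof.
move=> agree xs_gt0 vxs vg vd ve vf ef gd df ge.
have := wdvv_gap agree xs_gt0 vxs vg vd ve vf.
rewrite (gap_eq0 gd) (gap_eq0 df) (gap_eq0 ge) !addr0 /gap ef => /eqP.
by rewrite subr_eq0 => /eqP.
Qed.

Definition agree_heavier (s : seq (Mon a)) := forall t, all_valid t -> size t = size s ->
  (deg_sq_sum s < deg_sq_sum t)%N -> corr1 t = corr2 t.

Lemma agree_or_selection s : all_valid s -> (3 <= size s)%N ->
  corr1 s = corr2 s \/ ((forall i, a i %| expsum i s + 2)%N /\
                         (\sum_(i < N) (expsum i s + 2) %/ a i = N + size s - 3)%N).
Proof.
move=> vs size_s; case: T1 T2 => _ _ dim1 int1 _ [_ _ dim2 int2 _].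
have selection (corr : seq (Mon a) -> K) : ax_dim corr -> ax_int corr -> corr s != 0 ->
    (forall i, a i %| expsum i s + 2)%N /\
    (\sum_(i < N) (expsum i s + 2) %/ a i = N + size s - 3)%N.
  move=> dim int corr_neq0; split=> [i|]; first exact: (selection_dvd int vs size_s corr_neq0 i).
  exact: (selection_sum dim int vs size_s corr_neq0).
have [corr1_0|/(selection _ dim1 int1)] := eqVneq (corr1 s) 0; last by right.
have [corr2_0|/(selection _ dim2 int2)] := eqVneq (corr2 s) 0; last by right.
by left; rewrite corr1_0 corr2_0.
Qed.

(* Splitting a variable off the third heaviest insertion [T] moves degree to
   heavier insertions in the three other WDVV terms, which increases [deg_sq_sum]. *)
Lemma agree_split_light P R T rest :
  agree_below (size rest + 3) -> agree_heavier (rest ++ [:: P; R; T]) ->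
  (0 < size rest)%N -> all_valid rest -> valid P -> valid R -> valid T ->
  (mdeg R <= mdeg P)%N -> (mdeg T <= mdeg R)%N -> (1 < mdeg T)%N ->
  corr1 (rest ++ [:: P; R; T]) = corr2 (rest ++ [:: P; R; T]).
Proof.
move=> agree heavier rest_gt0 vrest vP vR vT RP TR T_gt1.
have {}vrest : all (@valid N a) rest := vrest.
have [l T_l] : exists l, (0 < T l)%N.
  apply/existsP; apply: contraLR T_gt1; rewrite negb_exists => /forallP T0.
  by rewrite /mdeg big1 // => i _; apply/eqP; rewrite -leqn0 leqNgt T0.
have ve := mvar_valid l; have vf := mdiv_var_valid l vT.
have deg_f := mdeg_mdiv_var vT T_l; have deg_e := mdeg_mvar l.
rewrite -(madd_mvar_mdiv_var vT T_l).
have heavy t : all_valid t -> size t = size rest + 3 ->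
    (deg_sq_sum rest + mdeg P ^ 2 + mdeg R ^ 2 + mdeg T ^ 2 < deg_sq_sum t)%N ->
    corr1 t = corr2 t.
  move=> vt size_t lt_t; apply: heavier => //; first by rewrite size_cat size_t.
  by rewrite deg_sq_sum_cat !deg_sq_sum_cons [deg_sq_sum [::]]big_nil; lia.
apply: agree_by_wdvv => //; rewrite ?sum_valid_mvar_mdiv_var // => ok; apply: heavy.
- by rewrite /all_valid /= all_cat madd_valid //= vrest ve vf.
- by rewrite /= size_cat /=; lia.
- rewrite !deg_sq_sum_cons deg_sq_sum_cat !deg_sq_sum_cons mdeg_madd // deg_e deg_f.
  by rewrite [deg_sq_sum [::]]big_nil; nia.
- by rewrite /all_valid all_cat /= madd_valid //= vrest vP ve.
- by rewrite size_cat.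
- rewrite deg_sq_sum_cat !deg_sq_sum_cons mdeg_madd // deg_e deg_f.
  by rewrite [deg_sq_sum [::]]big_nil; nia.
- by rewrite /all_valid /= all_cat madd_valid //= vrest vR vf.
- by rewrite /= size_cat /=; lia.
- rewrite !deg_sq_sum_cons deg_sq_sum_cat !deg_sq_sum_cons mdeg_madd // deg_e deg_f.
  by rewrite [deg_sq_sum [::]]big_nil; nia.
Qed.

Lemma agree_heavier_perm s t : perm_eq s t -> agree_heavier s -> agree_heavier t.
Proof.
move=> st heavier u vu; rewrite -(perm_size st) /deg_sq_sum -(perm_big _ st).
exact: heavier.
Qed.

Section BaseCase.
Hypothesis agree_base : forall j (r1 r2 r3 r4 : Mon a),
  is_xj j r1 -> is_xj j r2 -> is_xj_top j r3 -> is_top r4 ->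
  corr1 [:: r1; r2; r3; r4] = corr2 [:: r1; r2; r3; r4].

(* Here [P R] is [x_j^(a_j - 2)] times the top monomial.  Unless [R] is a power of
   [x_j], one more WDVV step splitting a variable off [R] moves degree onto [P]. *)
Lemma agree_terminal j P R u1 u2 :
  agree_below 4 -> agree_heavier [:: P; R; u1; u2] -> valid P -> valid R ->
  is_xj j u1 -> is_xj j u2 -> P j = (a j - 2)%N :> nat -> R j = (a j - 2)%N :> nat ->
  (forall i, i != j -> P i + R i = a i - 2)%N -> (mdeg R <= mdeg P)%N ->
  corr1 [:: P; R; u1; u2] = corr2 [:: P; R; u1; u2].
Proof.
move=> agree heavier vP vR xj_u1 xj_u2 P_j R_j PR_other RP.
have vu1 := is_xj_valid xj_u1; have vu2 := is_xj_valid xj_u2.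
case: (boolP [exists i, (i != j) && (0 < R i)%N]) => [/existsP [i /andP [ne_ij R_i]]|R_pow].
  have perm_t : perm_eq [:: u1; P; u2; R] [:: P; R; u1; u2].
    by apply/permP => p /=; ring.
  apply: (agree_perm _ perm_t); first by rewrite /all_valid /= vu1 vP vu2 vR.
  have ve := mvar_valid i; have vf := mdiv_var_valid i vR.
  rewrite -(madd_mvar_mdiv_var vR R_i).
  apply: (@agree_by_wdvv [:: u1]) => //; rewrite ?sum_valid_mvar_mdiv_var //.
  - by rewrite /all_valid /= vu1.
  - move=> /forallP /(_ j); rewrite (is_xjE xj_u2) eqxx P_j; lia.
  - move=> /forallP /(_ j); rewrite (is_xjE xj_u2) eqxx mdiv_varE // R_j.
    by rewrite eq_sym (negbTE ne_ij) subn0; have := a_gt2 j; lia.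
  - move=> Pe; apply: heavier.
    + by rewrite /all_valid /= madd_valid // vu1 vu2 mdiv_var_valid.
    + by [].
    rewrite !deg_sq_sum_cons [deg_sq_sum [::]]big_nil mdeg_madd // mdeg_mvar.
    by rewrite mdeg_mdiv_var //; have := leq_exp_mdeg R i; nia.
have R_other i : i != j -> R i = 0 :> nat.
  move=> ne_ij; move: R_pow; rewrite negb_exists => /forallP /(_ i).
  by rewrite ne_ij /= lt0n negbK => /eqP.
have top_R : is_xj_top j R.
  by apply/forallP => i; case: (eqVneq i j) => [->|/R_other ->]; rewrite ?R_j.
have top_P : is_top P.
  apply/forallP => i; case: (eqVneq i j) => [->|ne_ij]; first by rewrite P_j.
  by have := PR_other i ne_ij; rewrite R_other // addn0 => ->.
apply: agree_perm (agree_base xj_u1 xj_u2 top_R top_P).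
  by rewrite /all_valid /= vu1 vu2 vR vP.
by apply/permP => p /=; ring.
Qed.

Lemma agree_step s : (4 <= size s)%N -> all_valid s -> agree_below (size s) ->
  agree_heavier s -> corr1 s = corr2 s.
Proof.
move=> size_s vs agree heavier.
pose ge := [rel x y : Mon a | mdeg y <= mdeg x]%N.
have st : perm_eq (sort ge s) s by rewrite perm_sort.
have sorted_t : sorted ge (sort ge s) by apply: sort_sorted => x y; exact: leq_total.
apply: (agree_perm _ st); first by rewrite /all_valid (perm_all _ st).
move: (sort ge s) st sorted_t => t st sorted_t.
have vt : all (@valid N a) t by rewrite (perm_all _ st).
rewrite perm_sym in st; have {heavier} := agree_heavier_perm st heavier.
rewrite (perm_size st) in size_s agree.
case: t => [|P [|R [|T rest]]] //= in st vt sorted_t size_s agree *.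
move=> heavier; case/and4P: vt => vP vR vT vrest.
have ge_trans : transitive ge by move=> y x z /= yx zy; exact: leq_trans zy yx.
case/and3P: sorted_t => RP TR /(order_path_min ge_trans) rest_le.
have [T_gt1|T_le1] := ltnP 1 (mdeg T).
  have perm_rest : perm_eq (rest ++ [:: P; R; T]) [:: P, R, T & rest] by rewrite perm_catC.
  apply: (agree_perm _ perm_rest); first by rewrite /all_valid all_cat vrest /= vP vR vT.
  apply: agree_split_light => //; first by rewrite addn3.
  by apply: (agree_heavier_perm _ heavier); rewrite perm_sym.
have vs' : all_valid [:: P, R, T & rest] by rewrite /all_valid /= vP vR vT.
have [//|[dvd_a sum_eq]] := agree_or_selection vs' isT.
have light : {in T :: rest, forall r, mdeg r <= 1}%N.
  move=> r; rewrite inE => /predU1P [->//|r_in].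
  exact: leq_trans (allP rest_le r r_in) T_le1.
have {}sum_eq : (\sum_(i < N) (expsum i [:: P, R, T & rest] + 2) %/ a i =
    N + size (T :: rest) - 1)%N by rewrite sum_eq /=; lia.
have [j [u1 [u2 [shape [xj_u1 xj_u2 P_j R_j PR_other]]]]] :=
  selection_terminal vP vR light size_s dvd_a sum_eq.
case: shape => eq_T eq_rest; subst T rest.
exact: (agree_terminal agree heavier vP vR xj_u1 xj_u2 P_j R_j PR_other RP).
Qed.

Lemma agree_size k : (4 <= k)%N -> agree_below k ->
  forall s, all_valid s -> size s = k -> corr1 s = corr2 s.
Proof.
move=> k_ge4 agree s vs size_s.
pose bound := (k * mdeg_max ^ 2)%N.
have [n] := ubnP (bound - deg_sq_sum s).
elim: n s vs size_s => // n IHn s vs size_s lt_n.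
apply: agree_step; rewrite ?size_s // => t vt size_t lt_st.
apply: IHn; rewrite ?size_t ?size_s //.
by have := deg_sq_sum_bound vt; rewrite size_t size_s; lia.
Qed.

Lemma agree_all s : all_valid s -> (3 <= size s)%N -> corr1 s = corr2 s.
Proof.
suff agree k : agree_below k by move=> vs size_s; exact: (agree (size s).+1).
elim: k => [|k IHk] t vt size_t; rewrite ?ltnS // => le_tk.
have [lt_tk|gt_tk|eq_tk] := ltngtP (size t) k.
- exact: IHk.
- by rewrite ltnNge le_tk in gt_tk.
have [k_ge4|k_le3] := leqP 4 k; first exact: (agree_size k_ge4 IHk vt eq_tk).
case: T1 T2 => _ three1 _ _ _ [_ three2 _ _ _].
case: t vt size_t eq_tk {le_tk} => [|r1 [|r2 [|r3 [|r4 t]]]] //=; last by lia.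
by rewrite /all_valid /= => /and4P [v1 v2 v3 _] _ _; rewrite three1 // three2.
Qed.

End BaseCase.

End TwoTheories.

End Fermat.

Local Open Scope ring_scope.

Theorem proposition4p7 (K : numFieldType) (N : nat) (a : 'I_N -> nat)
  (c : K) (corr1 corr2 : seq (Mon a) -> K) :
  (forall i, (2 < a i)%N) -> c != 0 ->
  genus0_theory c corr1 -> genus0_theory c corr2 ->
  (forall j (r1 r2 r3 r4 : Mon a),
      is_xj j r1 -> is_xj j r2 -> is_xj_top j r3 -> is_top r4 ->
      corr1 [:: r1; r2; r3; r4] = corr2 [:: r1; r2; r3; r4]) ->
  forall s : seq (Mon a), all (@valid N a) s -> (3 <= size s)%N ->
    corr1 s = corr2 s.
Proof.
move=> a_gt2 c_neq0 T1 T2 agree_base s vs size_s.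
exact: (agree_all a_gt2 c_neq0 T1 T2 agree_base vs size_s).
Qed.
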